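(* Let $c=1$, $\lambda_1,\lambda_2,\mu_1,\mu_2>0$, $\lambda=\lambda_1+\lambda_2$, let $X$ be the Markov chain described in the context and fix $\alpha$ with $\mathrm{Re}\,\alpha>0$. Then the scalar $G(\alpha)$ satisfies $$(\lambda+\mu_1+\alpha)G(\alpha)=\mu_1+\lambda_1G(\alpha)^2+\lambda_2G(\alpha)\,\phi_{\lambda_2,\mu_2}\bigl(\lambda_1(1-G(\alpha))+\alpha\bigr).$$
   Context: With $c=1$, the Markov chain $X$ on $\mathbb{N}_0^2$ has only nonzero off-diagonal rates $q((i,j),(i+1,j))=\lambda_1$, $q((i,j),(i,j+1))=\lambda_2$ ($i,j\ge0$), $q((i,0),(i-1,0))=\mu_1$ ($i\ge1$), $q((i,j),(i,j-1))=\mu_2$ ($j\ge1$) (single-server queue with two classes, class 2 preemptive priority). For $A\subset\mathbb{N}_0^2$, $\tau_A=\inf\{t>0:X(t^-)\ne X(t)\in A\}$; $E_z$ is expectation given $X(0)=z$. $G(\alpha)=E_{(i+1,0)}[e^{-\alpha\tau_{\{(i,0)\}}}]$, which does not depend on $i\ge0$. For $\lambda',\mu'>0$, $\phi_{\lambda',\mu'}(s)=\frac{\lambda'+\mu'+s-\sqrt{(\lambda'+\mu'+s)^2-4\lambda'\mu'}}{2\lambda'}$ is the Laplace–Stieltjes transform of the busy period of an $M/M/1$ queue (arrival rate $\lambda'$, service rate $\mu'$) started by one customer. *)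

From mathcomp Require Import all_boot all_order all_algebra.
From mathcomp Require Import complex.
From mathcomp Require Import all_classical all_reals all_analysis.
Import numFieldNormedType.Exports.

Set Implicit Arguments.
Unset Strict Implicit.
Unset Printing Implicit Defensive.

Import Order.TTheory GRing.Theory Num.Theory.
Local Open Scope ring_scope.
Local Open Scope complex_scope.
Local Open Scope classical_set_scope.

Definition state := (nat * nat)%type.

Section Chain.
Variable R : realType.
Variables (lam1 lam2 mu1 mu2 : R).

(* Off-diagonal transition rates q(x,y) of the two-class preemptive-priority
   single-server queue (c = 1). *)
Definition rate (x y : state) : R :=
  let: (i, j) := x in
    (if y == (i.+1, j) then lam1 else 0)
  + (if y == (i, j.+1) then lam2 else 0)
  + (if [&& j == 0%N, (0 < i)%N & y == (i.-1, 0%N)] then mu1 else 0)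
  + (if (0 < j)%N && (y == (i, j.-1)) then mu2 else 0).

(* A list containing every state reachable in one jump from x (possibly with
   extra entries of rate 0, namely x itself, which contribute nothing). *)
Definition neighbours (x : state) : seq state :=
  let: (i, j) := x in [:: (i.+1, j); (i, j.+1); (i.-1, j); (i, j.-1)].

Definition qtot (x : state) : R := \sum_(y <- neighbours x) rate x y.

(* Contribution of one jump x -> y to E[e^{-alpha * (holding time)} ; jump to y]:
   (jump-chain probability q(x,y)/q(x)) * (LST q(x)/(q(x)+alpha) of the
   exponential(q(x)) holding time). *)
Definition jumpw (alpha : R[i]) (x y : state) : R[i] :=
  ((rate x y / qtot x)%:C) * ((qtot x)%:C / ((qtot x)%:C + alpha)).

(* hitLST_upto n A alpha x = E_x[ e^{-alpha tau_A} ; tau_A is reached within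
   the first n jumps ], where tau_A = inf{t > 0 : X(t-) <> X(t) in A}, computed
   from the jump-chain / exponential-holding-time construction of X. *)
Fixpoint hitLST_upto (n : nat) (A : pred state) (alpha : R[i]) (x : state)
  : R[i] :=
  match n with
  | 0 => 0
  | n'.+1 => \sum_(y <- neighbours x)
               jumpw alpha x y * (if A y then 1 else hitLST_upto n' A alpha y)
  end.

(* hitLST A alpha z g  <->  g = E_z[ e^{-alpha tau_A} ]  (with e^{-alpha tau_A}
   = 0 on {tau_A = +oo}, Re alpha > 0), obtained as the limit, as n -> oo, of the
   expectation restricted to {tau_A within n jumps} (monotone/dominated
   convergence); complex convergence is expressed componentwise. *)
Definition hitLST (A : pred state) (alpha : R[i]) (z : state) (g : R[i])
  : Prop :=
  (fun n => complex.Re (hitLST_upto n A alpha z)) @ \oo --> complex.Re g /\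
  (fun n => complex.Im (hitLST_upto n A alpha z)) @ \oo --> complex.Im g.

End Chain.

(* phi_{lam,mu}(s): LST of the M/M/1 busy period, with the principal complex
   square root sqrtc (nonnegative real part). *)
Definition phiBP (R : realType) (lam mu : R) (s : R[i]) : R[i] :=
  let b := lam%:C + mu%:C + s in
  (b - sqrtc (b ^+ 2 - 4%:R * lam%:C * mu%:C)) / (2%:R * lam%:C).

From mathcomp Require Import all_boot all_order all_algebra.
From mathcomp Require Import complex.
From mathcomp Require Import all_classical all_reals all_analysis.
From mathcomp Require Import lra ring zify.
Import numFieldNormedType.Exports.
Import Order.TTheory GRing.Theory Num.Theory Normc.
Local Open Scope ring_scope.
Local Open Scope complex_scope.
Local Open Scope classical_set_scope.

(* Write H_i(x) for E_x[exp(-alpha tau_{(i,0)})].  As Re alpha > 0, the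
   one-jump recursion defining the truncated transforms contracts the complex
   modulus by rho = Q / (Q + Re alpha), Q bounding the jump rates; hence H_i
   exists as a limit, satisfies the first-step equation, and is its only
   bounded solution on any region that can be left only through (i,0).  The
   regions {k > i} are of this kind, which gives in turn
     H_i(k,j) = H_(i+1)(k+1,j), so that H_i(i+1,0) = G for every i;
     H_i = G H_(i+1) on {k > i+1}, so that H_i(k,0) = G^(k-i);
     H_i(k,j) = G^(k-i) psi^j, where psi = phi_(lam2,mu2)(lam1 (1-G) + alpha)
       is the root of lam2 psi^2 - (lam2 + mu2 + lam1 (1-G) + alpha) psi + mu2
       of modulus at most 1.
   The first-step equation at (i+1,0) is then the claimed identity. *)

Section ComplexModulus.
Context {R : rcfType}.
Implicit Types z : R[i].

Lemma ReD z z' : complex.Re (z + z') = complex.Re z + complex.Re z'.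
Proof. by case: z; case: z'. Qed.

Lemma ReB z z' : complex.Re (z - z') = complex.Re z - complex.Re z'.
Proof. by case: z; case: z'. Qed.

Lemma ImB z z' : complex.Im (z - z') = complex.Im z - complex.Im z'.
Proof. by case: z; case: z'. Qed.

Lemma normc_ge0 z : 0 <= normc z.
Proof. exact: (@normr_ge0 _ (Rcomplex R)). Qed.

Lemma normc_sum (I : Type) (s : seq I) (F : I -> R[i]) :
  normc (\sum_(y <- s) F y) <= \sum_(y <- s) normc (F y).
Proof. exact: (@ler_norm_sum _ (Rcomplex R)). Qed.

Lemma normc_distrC z z' : normc (z - z') = normc (z' - z).
Proof. by rewrite -normcN opprB. Qed.

Lemma normcR (r : R) : normc r%:C = `|r|.
Proof. by rewrite /normc /= expr0n /= addr0 sqrtr_sqr. Qed.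

Lemma normcX z n : normc (z ^+ n) = normc z ^+ n.
Proof. by elim: n => [|n IH]; rewrite ?normc1 // !exprS normcM IH. Qed.

Lemma normc_ge_Re z : `|complex.Re z| <= normc z.
Proof.
by case: z => a b; rewrite /normc -sqrtr_sqr ler_wsqrtr // lerDl sqr_ge0.
Qed.

Lemma Re_le_normc z : complex.Re z <= normc z.
Proof. exact: le_trans (ler_norm _) (normc_ge_Re z). Qed.

Lemma normc_ge_Im z : `|complex.Im z| <= normc z.
Proof.
by case: z => a b; rewrite /normc -sqrtr_sqr ler_wsqrtr // lerDr sqr_ge0.
Qed.

Lemma normc_le_ReIm z : normc z <= `|complex.Re z| + `|complex.Im z|.
Proof.
case: z => a b; have -> : a +i* b = a%:C + (0 +i* b) by simpc.
apply: le_trans (le_normcD _ _) _.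
by rewrite normcR /normc /= expr0n /= add0r sqrtr_sqr addr0 add0r.
Qed.

End ComplexModulus.

Section GeometricConvergence.
Context {R : realType} {rho : R}.
Hypotheses (rho_ge0 : 0 <= rho) (rho_lt1 : rho < 1).

Lemma cvg_geometric_tail (K : R) : K * rho ^+ n @[n --> \oo] --> 0.
Proof.
rewrite -(mulr0 K); apply: cvgMl_tmp; apply: cvg_expr.
by rewrite ger0_norm.
Qed.

Lemma le0_geometric (K z : R) : (forall n, z <= K * rho ^+ n) -> z <= 0.
Proof.
move=> zK; apply: (ler_cvg_to (cvg_cst z) (cvg_geometric_tail K)).
exact: nearW.
Qed.

Lemma geometric_limn (u : R ^nat) : (forall n, `|u n.+1 - u n| <= rho ^+ n) ->
  forall n, `|u n - limn u| <= (1 - rho)^-1 * rho ^+ n.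
Proof.
move=> du.
pose e n := (1 - rho)^-1 * rho ^+ n.
have eS n : e n - e n.+1 = rho ^+ n.
  by rewrite /e exprS; field; rewrite subr_eq0 gt_eqF.
pose c n := u n - e n; pose b n := u n + e n.
have c_nd : nondecreasing_seq c.
  apply/nondecreasing_seqP => n; have := du n; rewrite ler_norml => /andP[lo hi].
  by have := eS n; rewrite /c; lra.
have b_ni : nonincreasing_seq b.
  apply/nonincreasing_seqP => n; have := du n; rewrite ler_norml => /andP[lo hi].
  by have := eS n; rewrite /b; lra.
have e_ge0 n : 0 <= e n by rewrite mulr_ge0 ?exprn_ge0 // invr_ge0 subr_ge0 ltW.
have c_cvg : cvgn c.
  apply: nondecreasing_is_cvgn => //; exists (b 0%N) => _ [n _ <-].
  by apply: le_trans (b_ni _ _ (leq0n n)); have := e_ge0 n; rewrite /c /b; lra.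
have e_cvg : e n @[n --> \oo] --> 0 := cvg_geometric_tail _.
have u_lim : limn u = limn c.
  apply: cvg_lim => //.
  have -> : u = c \+ e by apply/funext => n; rewrite /c /= subrK.
  by rewrite -[limn c]addr0; apply: cvgD.
have b_lim : b @ \oo --> limn c.
  have -> : b = c \+ (fun n => 2%:R * e n).
    by apply/funext => n; rewrite /b /c /=; ring.
  by rewrite -[limn c]addr0 -(mulr0 2%:R); apply: cvgD => //; apply: cvgMl_tmp.
move=> n; rewrite u_lim ler_norml.
have := nondecreasing_cvgn_le c_nd c_cvg n.
have := nonincreasing_cvgn_ge b_ni (cvgP _ b_lim) n; rewrite (cvg_lim _ b_lim) //.
by rewrite /c /b -/(e n); lra.
Qed.

Definition limc (u : nat -> R[i]) : R[i] :=
  limn (fun n => complex.Re (u n)) +i* limn (fun n => complex.Im (u n)).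

Lemma geometric_limc (u : nat -> R[i]) :
    (forall n, normc (u n.+1 - u n) <= rho ^+ n) ->
  forall n, normc (u n - limc u) <= 2%:R * ((1 - rho)^-1 * rho ^+ n).
Proof.
move=> du n; apply: le_trans (normc_le_ReIm _) _.
have dRe : `|complex.Re (u n) - limn (fun n => complex.Re (u n))|
    <= (1 - rho)^-1 * rho ^+ n.
  by apply: geometric_limn => m; rewrite -ReB (le_trans (normc_ge_Re _)).
have dIm : `|complex.Im (u n) - limn (fun n => complex.Im (u n))|
    <= (1 - rho)^-1 * rho ^+ n.
  by apply: geometric_limn => m; rewrite -ImB (le_trans (normc_ge_Im _)).
rewrite ReB ImB /=; lra.
Qed.

Lemma limcE (u : nat -> R[i]) (l : R[i]) :
    (fun n => complex.Re (u n)) @ \oo --> complex.Re l ->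
    (fun n => complex.Im (u n)) @ \oo --> complex.Im l ->
  limc u = l.
Proof.
by case: l => a b ua ub; rewrite /limc (cvg_lim _ ua) // (cvg_lim _ ub).
Qed.

Lemma eq_geometric (K : R) (z z' : R[i]) :
  (forall n, normc (z - z') <= K * rho ^+ n) -> z = z'.
Proof.
move=> zK; apply/eqP; rewrite -subr_eq0; apply/eqP/eq0_normc/le_anti.
by rewrite normc_ge0 andbT; apply: le0_geometric zK.
Qed.

End GeometricConvergence.

Section BusyPeriod.
Context {R : realType}.
Variables (l m : R).
Hypotheses (l_gt0 : 0 < l) (m_gt0 : 0 < m).

Lemma phiBP_root s :
  l%:C * phiBP l m s ^+ 2 - (l%:C + m%:C + s) * phiBP l m s + m%:C = 0.
Proof.
rewrite /phiBP; set b := _ + s; set r := sqrtc _.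
have r2 : r ^+ 2 = b ^+ 2 - 4%:R * l%:C * m%:C by exact: sqr_sqrtc.
have l0 : l%:C != 0 :> R[i] by rewrite fmorph_eq0 gt_eqF.
have -> : l%:C * ((b - r) / (2%:R * l%:C)) ^+ 2
    - b * ((b - r) / (2%:R * l%:C)) + m%:C
  = (r ^+ 2 - (b ^+ 2 - 4%:R * l%:C * m%:C)) / (4%:R * l%:C).
  by field; rewrite l0 ?pnatr_eq0.
by rewrite r2 subrr mul0r.
Qed.

Lemma normc_sub_le_add (b r : R[i]) :
    0 < complex.Re b -> 0 <= complex.Re r ->
    complex.Im (r ^+ 2) = complex.Im (b ^+ 2) ->
  normc (b - r) <= normc (b + r).
Proof.
case: b => x y; case: r => u v /= x_gt0 u_ge0; rewrite !expr2 /= => uv_xy.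
rewrite ler_wsqrtr //; suff : 0 <= x * u + y * v by nra.
have [u0|u_gt0] := eqVneq u 0.
  have : x * y = 0 by move: uv_xy; rewrite u0; nra.
  move/eqP; rewrite mulf_eq0 gt_eqF //= => /eqP y0.
  by rewrite u0 y0; lra.
have : 0 <= u * (x * u + y * v) by nra.
by rewrite pmulr_rge0 // lt_def u_gt0.
Qed.

Lemma normc_phiBP_le1 s : 0 < complex.Re s -> normc (phiBP l m s) <= 1.
Proof.
move=> s_gt0; rewrite /phiBP; set b := _ + s; set r := sqrtc _.
have r2 : r ^+ 2 = b ^+ 2 - 4%:R * l%:C * m%:C by exact: sqr_sqrtc.
have l0 : l%:C != 0 :> R[i] by rewrite fmorph_eq0 gt_eqF.
set p := (b - r) / _; pose p' := (b + r) / (2%:R * l%:C).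
have pp' : p * p' = (m / l)%:C.
  have -> : p * p' = (b ^+ 2 - r ^+ 2) / (4%:R * l%:C ^+ 2).
    by rewrite /p /p'; field; rewrite l0 ?pnatr_eq0.
  by rewrite r2 rmorphM fmorphV /=; field; rewrite l0 ?pnatr_eq0.
have Re_b : complex.Re b = l + m + complex.Re s by rewrite /b; case: (s).
have p_le_p' : normc p <= normc p'.
  rewrite !normcM ler_wpM2r ?normc_ge0 //; apply: normc_sub_le_add.
  - by rewrite Re_b !addr_gt0.
  - by rewrite /r; case: (_ - _) => ? ? /=; exact: sqrtr_ge0.
  - rewrite r2 -(rmorph_nat (real_complex R)) -!rmorphM.
    by case: (b ^+ 2) => ? ? /=; rewrite subr0.
(* |p + p'| >= Re b / l = 1 + |p p'| + Re s / l, impossible if 1 < |p| <= |p'|. *)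
have sum_ge : (l + m + complex.Re s) / l <= normc p + normc p'.
  apply: le_trans (le_normcD _ _); have -> : p + p' = b / l%:C.
    by rewrite /p /p'; field; rewrite l0 ?pnatr_eq0.
  rewrite normcM normcV normcR (ger0_norm (ltW l_gt0)) ler_pM2r ?invr_gt0 //.
  by rewrite -Re_b Re_le_normc.
have prod_eq : normc p * normc p' = m / l.
  by rewrite -normcM pp' normcR ger0_norm // divr_ge0 // ltW.
rewrite leNgt; apply/negP => p_gt1.
have : 0 < (normc p - 1) * (normc p' - 1) by rewrite mulr_gt0 // subr_gt0; lra.
have : (l + m + complex.Re s) / l = 1 + m / l + complex.Re s / l.
  by field; rewrite gt_eqF.
have : 0 < complex.Re s / l by rewrite divr_gt0.
nra.
Qed.

End BusyPeriod.

Definition hit_step {R : realType} {T : Type} (nb : T -> seq T)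
    (w : T -> T -> R[i]) (A : pred T) (f : T -> R[i]) (x : T) : R[i] :=
  \sum_(y <- nb x) w x y * (if A y then 1 else f y).

Section FirstStepEquation.
Context {R : realType} {T : eqType} {nb : T -> seq T} {w : T -> T -> R[i]}.
Context {rho : R}.
Hypotheses (rho_ge0 : 0 <= rho) (rho_lt1 : rho < 1).
Hypothesis sum_normc_w : forall x, \sum_(y <- nb x) normc (w x y) <= rho.

Lemma normc_first_step_le x (e : T -> R[i]) (M : R) : 0 <= M ->
    (forall y, y \in nb x -> w x y * e y = 0 \/ normc (e y) <= M) ->
  normc (\sum_(y <- nb x) w x y * e y) <= rho * M.
Proof.
move=> M_ge0 eM; apply: le_trans (normc_sum _ _ _) _.
apply: le_trans (ler_wpM2r M_ge0 (sum_normc_w x)); rewrite big_distrl /=.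
rewrite big_seq [leRHS]big_seq; apply: ler_sum => y ny.
have [->|eyM] := eM y ny; first by rewrite normc0 mulr_ge0 ?normc_ge0.
by rewrite normcM ler_wpM2l ?normc_ge0.
Qed.

Lemma first_step_eq0 (S : pred T) (d : T -> R[i]) (e : T -> T -> R[i]) (M : R) :
    (forall x, S x -> normc (d x) <= M) ->
    (forall x, S x -> d x = \sum_(y <- nb x) w x y * e x y) ->
    (forall x y, S x -> y \in nb x -> w x y * e x y = 0 \/ S y /\ e x y = d y) ->
  forall x, S x -> d x = 0.
Proof.
move=> dM dE de.
have dK n x : S x -> normc (d x) <= `|M| * rho ^+ n.
  elim: n x => [|n IH] x Sx.
    by rewrite mulr1 (le_trans (dM x Sx)) ?ler_norm.
  rewrite dE // exprS mulrCA; apply: normc_first_step_le => [|y ny].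
    by rewrite mulr_ge0 ?exprn_ge0.
  by have [|[Sy ->]] := de x y Sx ny; [left | right; exact: IH].
move=> x Sx; apply/eq0_normc/le_anti; rewrite normc_ge0 andbT.
by apply: (le0_geometric rho_ge0 rho_lt1 (`|M|)) => n; exact: dK.
Qed.

Lemma hit_step_contraction A f f' (M : R) x : 0 <= M ->
    (forall y, normc (f y - f' y) <= M) ->
  normc (hit_step nb w A f x - hit_step nb w A f' x) <= rho * M.
Proof.
move=> M_ge0 fM; rewrite /hit_step -sumrB.
under eq_bigr do rewrite -mulrBr.
apply: normc_first_step_le => // y _; right.
by case: (A y); rewrite ?subrr ?normc0.
Qed.

Section Hitting.
Context {A : pred T} {h : nat -> T -> R[i]}.
Hypotheses (h0 : forall x, h 0 x = 0)
  (hS : forall n x, h n.+1 x = hit_step nb w A (h n) x).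

Lemma hit_approx_le1 n x : normc (h n x) <= 1.
Proof.
elim: n x => [|n IH] x; first by rewrite h0 normc0.
rewrite hS; apply: (@le_trans _ _ (rho * 1)); last by rewrite mulr1 ltW.
by apply: normc_first_step_le => // y _; right; case: (A y); rewrite ?normc1.
Qed.

Lemma hit_approx_succ n x : normc (h n.+1 x - h n x) <= rho ^+ n.
Proof.
elim: n x => [|n IH] x; first by rewrite h0 subr0 hit_approx_le1.
by rewrite [h n.+2 x]hS [h n.+1 x]hS exprS hit_step_contraction ?exprn_ge0.
Qed.

Lemma hit_limc_approx n x :
  normc (h n x - limc (h ^~ x)) <= 2%:R * ((1 - rho)^-1 * rho ^+ n).
Proof. exact: (geometric_limc rho_ge0 rho_lt1 _ (hit_approx_succ ^~ x)). Qed.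

Lemma hit_limc_le1 x : normc (limc (h ^~ x)) <= 1.
Proof.
rewrite -subr_le0; apply: (le0_geometric rho_ge0 rho_lt1 (2%:R * (1 - rho)^-1)).
move=> n; have := le_normcD (h n x) (limc (h ^~ x) - h n x).
rewrite addrC subrK normc_distrC.
by have := hit_limc_approx n x; have := hit_approx_le1 n x; rewrite -mulrA; lra.
Qed.

Lemma hit_limc_first_step x :
  limc (h ^~ x) = hit_step nb w A (fun y => limc (h ^~ y)) x.
Proof.
apply: (eq_geometric rho_ge0 rho_lt1 (4%:R * (1 - rho)^-1)) => n.
set H := fun y => limc (h ^~ y).
have -> : H x - hit_step nb w A H x
    = (H x - h n.+1 x) + (hit_step nb w A (h n) x - hit_step nb w A H x).
  by rewrite hS addrA subrK.
apply: le_trans (le_normcD _ _) _.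
set t := (1 - rho)^-1 * rho ^+ n.
have t_ge0 : 0 <= t by rewrite mulr_ge0 ?exprn_ge0 // invr_ge0 subr_ge0 ltW.
have := hit_limc_approx n.+1 x.
rewrite normc_distrC exprS [_ * (rho * _)]mulrCA -/t.
have : normc (hit_step nb w A (h n) x - hit_step nb w A H x) <= rho * (2%:R * t).
  apply: hit_step_contraction => [|y]; first by rewrite mulr_ge0.
  exact: hit_limc_approx.
have : rho * t <= t by rewrite ler_piMl // ltW.
rewrite -mulrA -/t; lra.
Qed.

End Hitting.

End FirstStepEquation.

Section PriorityQueue.
Context {R : realType} {lam1 lam2 mu1 mu2 : R}.
Hypotheses (lam1_gt0 : 0 < lam1) (lam2_gt0 : 0 < lam2).
Hypotheses (mu1_gt0 : 0 < mu1) (mu2_gt0 : 0 < mu2).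
Context {alpha : R[i]}.
Hypothesis alpha_gt0 : 0 < complex.Re alpha.

Local Notation q := (rate lam1 lam2 mu1 mu2).
Local Notation q_out := (qtot lam1 lam2 mu1 mu2).
Local Notation w := (jumpw lam1 lam2 mu1 mu2 alpha).

(* [lra] ignores section hypotheses, so they are reintroduced first. *)
Ltac rates_lra :=
  move: lam1_gt0 lam2_gt0 mu1_gt0 mu2_gt0 alpha_gt0 => ? ? ? ? ?; lra.

Ltac eval_rate := rewrite /rate ?xpair_eqE;
  repeat match goal with
  | |- context [(?a == ?b)%N] =>
      (have -> : (a == b)%N = true by apply/eqP; lia) ||
      (have -> : (a == b)%N = false by apply/eqP; lia)
  | |- context [(0 < ?a)%N] =>
      (have -> : (0 < a)%N = true by lia) || (have -> : (0 < a)%N = false by lia)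
  end; rewrite /= ?(addr0, add0r).

Lemma rate_ge0 x y : 0 <= q x y.
Proof. by case: x => i j; rewrite /rate; repeat case: ifP => _; rates_lra. Qed.

Lemma qtotE i j : q_out (i, j)
  = lam1 + lam2 + (if j is 0 then (if i is 0 then 0 else mu1) else mu2).
Proof.
by case: i => [|i]; case: j => [|j];
  rewrite /qtot /= !big_cons big_nil; eval_rate; rewrite ?addrA ?addr0.
Qed.

Let Q := lam1 + lam2 + mu1 + mu2.
Let rho := Q / (Q + complex.Re alpha).

Lemma rho_ge0 : 0 <= rho.
Proof. by rewrite /rho /Q divr_ge0 //; rates_lra. Qed.

Lemma rho_lt1 : rho < 1.
Proof. by rewrite /rho /Q ltr_pdivrMr; rates_lra. Qed.

Lemma qtot_gt0 x : 0 < q_out x.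
Proof. by case: x => i j; rewrite qtotE; case: i; case: j => *; rates_lra. Qed.

Lemma qtot_le x : q_out x <= Q.
Proof. by case: x => i j; rewrite qtotE /Q; case: i; case: j => *; rates_lra. Qed.

Lemma qtot_alpha_neq0 x : (q_out x)%:C + alpha != 0.
Proof.
apply/eqP => /(congr1 (@complex.Re R)); rewrite ReD /=.
by have := qtot_gt0 x; rates_lra.
Qed.

Lemma jumpwE x y : w x y = (q x y)%:C / ((q_out x)%:C + alpha).
Proof.
have q0 : (q_out x)%:C != 0 :> R[i] by rewrite fmorph_eq0 gt_eqF ?qtot_gt0.
by rewrite /jumpw rmorphM fmorphV; field; rewrite q0 qtot_alpha_neq0.
Qed.

Lemma sum_normc_jumpw x : \sum_(y <- neighbours x) normc (w x y) <= rho.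
Proof.
rewrite (eq_bigr (fun y => q x y / normc ((q_out x)%:C + alpha))); last first.
  by move=> y _; rewrite jumpwE normcM normcV normcR ger0_norm ?rate_ge0.
rewrite -big_distrl /=; change (\sum_(y <- neighbours x) q x y) with (q_out x).
have N_ge : q_out x + complex.Re alpha <= normc ((q_out x)%:C + alpha).
  by have := Re_le_normc ((q_out x)%:C + alpha); rewrite ReD.
have := qtot_gt0 x; have := qtot_le x; have := alpha_gt0.
rewrite /rho => a_gt0 q_le q_gt0.
rewrite ler_pdivrMr; last by lra.
rewrite mulrAC ler_pdivlMr; [nra | rewrite /Q; rates_lra].
Qed.

Lemma jumpw_shift k j y : w (k.+2, j) (y.1.+1, y.2) = w (k.+1, j) y.
Proof.
case: y => y1 y2; rewrite !jumpwE !qtotE /=.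
by congr (_%:C / _); rewrite /rate !xpair_eqE !eqSS.
Qed.

Lemma jumpw_blocked k j : w (k.+1, j.+1) (k, j.+1) = 0.
Proof. by rewrite jumpwE; eval_rate; rewrite mul0r. Qed.

Lemma above_target_neq i y : (i < y.1)%N -> (y == (i, 0%N)) = false.
Proof.
case: y => a b /= ia; apply/negbTE.
by apply: contraTneq ia => -[-> _]; rewrite ltnn.
Qed.

Lemma neighbours_above i {x y : state} : (i < x.1)%N -> y \in neighbours x ->
  [\/ (i < y.1)%N, y = (i, 0%N) | w x y = 0].
Proof.
case: x => [[|k] j] //= ik; rewrite !inE => /or4P[] /eqP ->;
  try by apply: Or31 => /=; lia.
have [ik'|] := ltnP i k; first exact: Or31.
move=> ki; have -> : k = i by lia.
by case: j => [|j]; [apply: Or32 | apply: Or33; exact: jumpw_blocked].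
Qed.

Lemma first_step_boundary k (f : state -> R[i]) :
    ((lam1 + lam2 + mu1)%:C + alpha)
      * \sum_(y <- neighbours (k.+1, 0%N)) w (k.+1, 0%N) y * f y
  = lam1%:C * f (k.+2, 0%N) + lam2%:C * f (k.+1, 1%N) + mu1%:C * f (k, 0%N).
Proof.
have := qtot_alpha_neq0 (k.+1, 0%N); rewrite qtotE /= => D.
rewrite !big_cons big_nil !jumpwE qtotE /=; eval_rate.
by rewrite rmorph0; field; rewrite -!rmorphD.
Qed.

Lemma first_step_interior k j (f : state -> R[i]) :
    ((lam1 + lam2 + mu2)%:C + alpha)
      * \sum_(y <- neighbours (k.+1, j.+1)) w (k.+1, j.+1) y * f y
  = lam1%:C * f (k.+2, j.+1) + lam2%:C * f (k.+1, j.+2) + mu2%:C * f (k.+1, j).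
Proof.
have := qtot_alpha_neq0 (k.+1, j.+1); rewrite qtotE /= => D.
rewrite !big_cons big_nil !jumpwE qtotE /=; eval_rate.
by field; rewrite -!rmorphD.
Qed.

Let approx i n x := hitLST_upto lam1 lam2 mu1 mu2 n (pred1 (i, 0%N)) alpha x.

Definition hit_lst i (x : state) : R[i] := limc (approx i ^~ x).
Local Notation H := hit_lst.

Lemma hit_lst_first_step i x :
  H i x = hit_step neighbours w (pred1 (i, 0%N)) (H i) x.
Proof.
exact: (hit_limc_first_step (h := approx i) rho_ge0 rho_lt1 sum_normc_jumpw).
Qed.

Lemma hit_lst_le1 i x : normc (H i x) <= 1.
Proof.
exact: (hit_limc_le1 (h := approx i) rho_ge0 rho_lt1 sum_normc_jumpw).
Qed.

Lemma hit_lst_shift i k j : (i < k)%N -> H i (k, j) = H i.+1 (k.+1, j).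
Proof.
pose d (x : state) := H i x - H i.+1 (x.1.+1, x.2).
pose e (x y : state) := if y == (i, 0%N) then 0 else d y.
move=> ik; apply/eqP; rewrite -subr_eq0; apply/eqP.
suff /(_ (k, j) ik) : forall x, (i < x.1)%N -> d x = 0 by [].
apply: (first_step_eq0 rho_ge0 rho_lt1 sum_normc_jumpw
          (fun x => (i < x.1)%N) d e 2%:R).
- move=> x _; apply: le_trans (le_normcD _ _) _; rewrite normcN.
  by have := hit_lst_le1 i x; have := hit_lst_le1 i.+1 (x.1.+1, x.2); lra.
- case=> [[|k'] j'] //= _.
  rewrite /d /= [H i _]hit_lst_first_step [H i.+1 _]hit_lst_first_step /hit_step.
  have -> : neighbours (k'.+2, j')
    = [seq (y.1.+1, y.2) | y <- neighbours (k'.+1, j')] by [].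
  rewrite big_map -sumrB; apply: eq_bigr => -[y1 y2] _.
  rewrite jumpw_shift -mulrBr /e /= !xpair_eqE eqSS.
  by case: ifP; rewrite ?subrr.
- move=> x y /= ix ny; rewrite /e; have [iy|->|->] := neighbours_above i ix ny.
  + by right; rewrite above_target_neq.
  + by left; rewrite eqxx mulr0.
  + by left; rewrite mul0r.
Qed.

Definition lst_down := H 0 (1%N, 0%N).
Local Notation G := lst_down.

Lemma hit_lst_next i : H i (i.+1, 0%N) = G.
Proof. by elim: i => [//|i IH]; rewrite -hit_lst_shift. Qed.

Lemma hit_lst_factor i x : (i.+1 < x.1)%N -> H i x = G * H i.+1 x.
Proof.
pose d (x : state) := H i x - G * H i.+1 x.
pose e (x y : state) := (if y == (i, 0%N) then 1 else H i y)
  - G * (if y == (i.+1, 0%N) then 1 else H i.+1 y).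
move=> ix; apply/eqP; rewrite -subr_eq0; apply/eqP.
suff /(_ x ix) : forall x, (i.+1 < x.1)%N -> d x = 0 by [].
apply: (first_step_eq0 rho_ge0 rho_lt1 sum_normc_jumpw
          (fun x => (i.+1 < x.1)%N) d e 2%:R).
- move=> z _; apply: le_trans (le_normcD _ _) _; rewrite normcN normcM.
  have := hit_lst_le1 i z; have := hit_lst_le1 i.+1 z.
  have := hit_lst_le1 0 (1%N, 0%N); rewrite -/lst_down.
  by have := normc_ge0 G; have := normc_ge0 (H i.+1 z); nra.
- move=> z _; rewrite /d [H i z]hit_lst_first_step [H i.+1 z]hit_lst_first_step.
  rewrite /hit_step mulr_sumr -sumrB.
  by apply: eq_bigr => y _; rewrite mulrCA -mulrBr.
- move=> z y /= iz ny; rewrite /e; have [iy|->|->] := neighbours_above i.+1 iz ny.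
  + by right; rewrite !above_target_neq // ltnW.
  + by left; rewrite eqxx above_target_neq // hit_lst_next mulr1 subrr mulr0.
  + by left; rewrite mul0r.
Qed.

Lemma hit_lst_boundary i k : (i < k)%N -> H i (k, 0%N) = G ^+ (k - i).
Proof.
elim: k => [//|k IH]; rewrite ltnS leq_eqVlt => /orP[/eqP <-|ik].
  by rewrite subSnn hit_lst_next.
by rewrite hit_lst_factor // -hit_lst_shift // IH // subSn ?exprS // ltnW.
Qed.

Definition class2_factor := phiBP lam2 mu2 (lam1%:C * (1 - lst_down) + alpha).
Local Notation psi := class2_factor.

Lemma normc_class2_factor_le1 : normc psi <= 1.
Proof.
apply: normc_phiBP_le1 => //.
have := hit_lst_le1 0 (1%N, 0%N); rewrite -/lst_down.
move: (Re_le_normc G) alpha_gt0 lam1_gt0.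
case: G => a b; case: alpha => c d /= ga c_gt0 l1 down_le1.
rewrite mul0r subr0.
have : 0 <= lam1 * (1 - a) by rewrite mulr_ge0 ?subr_ge0; lra.
lra.
Qed.

Definition product_form i (x : state) : R[i] := G ^+ (x.1 - i) * psi ^+ x.2.

Lemma product_form_first_step i k j : (i <= k)%N ->
  product_form i (k.+1, j.+1)
  = \sum_(y <- neighbours (k.+1, j.+1)) w (k.+1, j.+1) y * product_form i y.
Proof.
move=> ik; have := qtot_alpha_neq0 (k.+1, j.+1); rewrite qtotE /= => D.
apply: (mulfI D); rewrite first_step_interior /product_form /= (subSn (leqW ik)).
have := phiBP_root lam2 mu2 lam2_gt0 (lam1%:C * (1 - G) + alpha).
rewrite -/class2_factor => root.
apply/eqP; rewrite -subr_eq0; apply/eqP.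
rewrite -[RHS](mulr0 (- (G ^+ (k.+1 - i) * psi ^+ j))) -root.
by rewrite !exprS; ring.
Qed.

Lemma hit_lst_interior i k j : (i < k)%N -> H i (k, j) = G ^+ (k - i) * psi ^+ j.
Proof.
pose d x := H i x - product_form i x.
pose e (x y : state) := (if y == (i, 0%N) then 1 else H i y) - product_form i y.
case: j => [|j] ik; first by rewrite hit_lst_boundary // mulr1.
apply/eqP; rewrite -subr_eq0; apply/eqP.
suff /(_ (k, j.+1)) : forall x, (i < x.1)%N && (0 < x.2)%N -> d x = 0.
  by apply; rewrite ik.
apply: (first_step_eq0 rho_ge0 rho_lt1 sum_normc_jumpw
          (fun x => (i < x.1)%N && (0 < x.2)%N) d e 2%:R).
- move=> x _; apply: le_trans (le_normcD _ _) _.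
  rewrite normcN /product_form normcM !normcX.
  have down_le1 := hit_lst_le1 0 (1%N, 0%N); rewrite -/lst_down in down_le1.
  have : normc G ^+ (x.1 - i) * normc psi ^+ x.2 <= 1.
    rewrite mulr_ile1 ?exprn_ge0 ?normc_ge0 ?exprn_ile1 ?normc_ge0 //.
    exact: normc_class2_factor_le1.
  by have := hit_lst_le1 i x; lra.
- case=> [[|k'] [|j']] /andP[ik' j_gt0] //.
  rewrite /d [H i _]hit_lst_first_step (product_form_first_step i k' j' ik').
  rewrite /hit_step -sumrB.
  by apply: eq_bigr => y _; rewrite -mulrBr.
- move=> x y /andP[ix _] ny; rewrite /e.
  have [iy|->|->] := neighbours_above i ix ny.
  + case: y iy {ny} => y1 [|y2] /= iy.
      left; rewrite above_target_neq // hit_lst_boundary //.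
      by rewrite /product_form /= mulr1 subrr mulr0.
    by right; rewrite iy above_target_neq.
  + by left; rewrite eqxx /product_form /= subnn !expr0 mulr1 subrr mulr0.
  + by left; rewrite mul0r.
Qed.

Lemma lst_down_first_step :
  ((lam1 + lam2 + mu1)%:C + alpha) * G
  = mu1%:C + lam1%:C * G ^+ 2 + lam2%:C * G * psi.
Proof.
rewrite {1}/lst_down hit_lst_first_step /hit_step first_step_boundary /=.
by rewrite hit_lst_boundary // hit_lst_interior //= !expr1; ring.
Qed.

Lemma hitLST_next_eq {i z} :
  hitLST lam1 lam2 mu1 mu2 (pred1 (i, 0%N)) alpha (i.+1, 0%N) z -> z = G.
Proof.
by case=> Re_cvg Im_cvg; rewrite -(hit_lst_next i); symmetry; apply: limcE.
Qed.

End PriorityQueue.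

Theorem proposition7 (R : realType) (lam1 lam2 mu1 mu2 : R)
  (hl1 : 0 < lam1) (hl2 : 0 < lam2) (hm1 : 0 < mu1) (hm2 : 0 < mu2)
  (alpha : R[i]) (halpha : 0 < complex.Re alpha)
  (i : nat) (G : R[i])
  (hG : hitLST lam1 lam2 mu1 mu2 (pred1 (i, 0%N)) alpha (i.+1, 0%N) G) :
  ((lam1 + lam2 + mu1)%:C + alpha) * G
  = mu1%:C + lam1%:C * G ^+ 2
    + lam2%:C * G * phiBP lam2 mu2 (lam1%:C * (1 - G) + alpha).
Proof.
rewrite (hitLST_next_eq hl1 hl2 hm1 hm2 halpha hG).
exact: lst_down_first_step.
Qed.
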